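(* There is an absolute constant $C > 0$ such that for all positive integers $n, k$ with $n \ge 3k$ there exist a positive integer $m$, a constant $H>0$, and a set $\Pi$ of linear-programming instances $\pi = (\bm{c}, \bm{A}, \bm{b}) \in \mathbb{R}^n \times \mathbb{R}^{m\times n} \times \mathbb{R}^m$ (each representing the LP $\max\{\bm{c}^\top \bm{x} : \bm{A}\bm{x} \le \bm{b}\}$) such that for every $\pi\in\Pi$, $\bm{x}=\mathbf{0}_n$ is feasible and the optimal value is at most $H$, and such that the class $\mathcal{U} = \{u(\bm{P}, \cdot) : \Pi \to \mathbb{R} \mid \bm{P} \in \mathbb{R}^{n\times k}\}$, where $u(\bm{P}, \pi) = \max\{\bm{c}^\top \bm{P}\bm{y} : \bm{A}\bm{P}\bm{y} \le \bm{b},\ \bm{y} \in \mathbb{R}^k\}$, satisfies $\mathrm{pdim}(\mathcal{U}) \ge C\, nk$. *)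

From HB Require Import structures.
From mathcomp Require Import all_boot all_order all_algebra.
From mathcomp Require Import all_classical all_reals ereal.
Set Implicit Arguments. Unset Strict Implicit. Unset Printing Implicit Defensive.
Import Order.TTheory GRing.Theory Num.Theory.
Local Open Scope ring_scope.
Local Open Scope classical_set_scope.

(* An LP instance pi = (c, A, b) in R^n x R^{m x n} x R^m, representing
   max { c^T x : A x <= b }.  Vectors are column vectors. *)
Definition lp_instance (R : realType) (n m : nat) : Type :=
  ('cV[R]_n * 'M[R]_(m, n) * 'cV[R]_m)%type.

Definition lp_c (R : realType) n m (pi : lp_instance R n m) : 'cV[R]_n := pi.1.1.
Definition lp_A (R : realType) n m (pi : lp_instance R n m) : 'M[R]_(m, n) := pi.1.2.
Definition lp_b (R : realType) n m (pi : lp_instance R n m) : 'cV[R]_m := pi.2.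

Definition vle (R : realType) p (u v : 'cV[R]_p) : Prop := forall i : 'I_p, u i 0 <= v i 0.

Definition dotv (R : realType) p (c x : 'cV[R]_p) : R := (c^T *m x) 0 0.

Definition lp_feasible (R : realType) n m (pi : lp_instance R n m) (x : 'cV[R]_n) : Prop :=
  vle (lp_A pi *m x) (lp_b pi).

(* Optimal value of max { c^T x : A x <= b } in the extended reals
   (+oo if unbounded, -oo if infeasible). *)
Definition lp_opt (R : realType) n m (pi : lp_instance R n m) : \bar R :=
  ereal_sup [set ((dotv (lp_c pi) x)%:E) | x in [set x | lp_feasible pi x]].

(* u(P, pi) = max { c^T P y : A P y <= b, y in R^k }, as a real number
   (it is finite on the instances considered in the theorem). *)
Definition u_val (R : realType) n m k (P : 'M[R]_(n, k)) (pi : lp_instance R n m) : R :=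
  fine (ereal_sup [set ((dotv (lp_c pi) (P *m y))%:E) |
                   y in [set y : 'cV[R]_k | vle (lp_A pi *m (P *m y)) (lp_b pi)]]).

Definition pshattered (Theta X : Type) {rR : realType} (F : Theta -> X -> rR)
  (N : nat) (pts : 'I_N -> X) (t : 'I_N -> rR) : Prop :=
  forall S : {set 'I_N}, exists theta : Theta,
    forall i : 'I_N, (t i <= F theta (pts i)) <-> (i \in S).

Definition pdim_ge (Theta X : Type) {rR : realType} (F : Theta -> X -> rR)
  (Pi : set X) (d : rR) : Prop :=
  exists (N : nat) (pts : 'I_N -> X) (t : 'I_N -> rR),
    (forall i, Pi (pts i)) /\ d <= N%:R /\ pshattered F pts t.

From HB Require Import structures.
From mathcomp Require Import all_boot all_order all_algebra.
From mathcomp Require Import all_classical all_reals ereal.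
From mathcomp Require Import zify.
Set Implicit Arguments. Unset Strict Implicit. Unset Printing Implicit Defensive.
Import Order.TTheory GRing.Theory Num.Theory.
Local Open Scope ring_scope.
Local Open Scope classical_set_scope.

(** Split the coordinates of R^n into k "top" and n - k "bottom" ones. The
    instance indexed by (a, l) maximises x_l over the box 0 <= x <= v, where v
    caps the top coordinate l at 1, the other top coordinates at 0, the bottom
    coordinate a at 0 and the other bottom coordinates at 1. A projection
    P = [I_k; B] with a 0/1 bottom block B then has value 1 on (a, l) when
    B_(a,l) = 0, and value 0 when B_(a,l) = 1, since row a of the box then
    forces y_l <= 0. Choosing B freely realises every labelling of the
    (n - k) k instances with threshold 1, and (n - k) k >= n k / 3. *)

Section LinearPrograms.
Variable R : realType.

Lemma ereal_sup_attained (T : Type) (A : set T) (f : T -> R) (x0 : T) :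
  A x0 -> (forall x, A x -> f x <= f x0) ->
  ereal_sup [set (f x)%:E | x in A] = (f x0)%:E.
Proof.
move=> Ax0 f_le; apply/le_anti/andP; split.
  by apply: ge_ereal_sup => _ [x Ax <-]; rewrite lee_fin f_le.
by apply: ereal_sup_ubound; exists x0.
Qed.

Lemma lp_opt_le n m (pi : lp_instance R n m) (H : R) :
  (forall x, lp_feasible pi x -> dotv (lp_c pi) x <= H) ->
  (lp_opt pi <= H%:E)%E.
Proof.
by move=> le_H; apply: ge_ereal_sup => _ [x Fx <-]; rewrite lee_fin le_H.
Qed.

Lemma u_val_attained n m k (P : 'M[R]_(n, k)) (pi : lp_instance R n m)
    (y0 : 'cV[R]_k) :
  lp_feasible pi (P *m y0) ->
  (forall y, lp_feasible pi (P *m y) ->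
     dotv (lp_c pi) (P *m y) <= dotv (lp_c pi) (P *m y0)) ->
  u_val P pi = dotv (lp_c pi) (P *m y0).
Proof.
move=> Fy0 le_y0; rewrite /u_val.
by rewrite (@ereal_sup_attained _ [set y | lp_feasible pi (P *m y)]
  (fun y => dotv (lp_c pi) (P *m y)) y0).
Qed.

Lemma dotv_delta n (i : 'I_n) (x : 'cV[R]_n) : dotv (delta_mx i 0) x = x i 0.
Proof. by rewrite /dotv trmx_delta -rowE mxE. Qed.

Definition box_lp n (c v : 'cV[R]_n) : lp_instance R n (n + n) :=
  (c, col_mx (- 1%:M) 1%:M, col_mx 0 v).

Lemma box_lp_feasibleE n (c v x : 'cV[R]_n) :
  lp_feasible (box_lp c v) x <-> vle 0 x /\ vle x v.
Proof.
rewrite /lp_feasible /vle /lp_A /lp_b /= mul_col_mx mulNmx !mul1mx.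
split=> [Fx | [x_ge0 x_le] i].
  split=> r; [have := Fx (lshift n r) | have := Fx (rshift n r)].
    by rewrite !col_mxEu !mxE oppr_le0.
  by rewrite !col_mxEd.
rewrite -(splitK i); case: (fintype.split i) => r /=.
  by rewrite !col_mxEu !mxE oppr_le0; have := x_ge0 r; rewrite mxE.
by rewrite !col_mxEd.
Qed.

End LinearPrograms.

Section Construction.
Variables (R : realType) (n k : nat).
Hypothesis le_kn : (k <= n)%N.

Definition cell := ('I_(n - k) * 'I_k)%type.

Definition top_row (l : 'I_k) : 'I_n := widen_ord le_kn l.

Lemma bottom_row_subproof (a : 'I_(n - k)) : (k + a < n)%N.
Proof. have := ltn_ord a; lia. Qed.
Definition bottom_row (a : 'I_(n - k)) : 'I_n :=
  Ordinal (bottom_row_subproof a).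

Variant top_bottom_spec (r : 'I_n) : Type :=
  | TopRow l of r = top_row l
  | BottomRow a of r = bottom_row a.

Lemma top_bottomP (r : 'I_n) : top_bottom_spec r.
Proof.
case: (ltnP r k) => [lt_rk | le_kr].
  by apply: (@TopRow _ (Ordinal lt_rk)); apply: val_inj.
have lt_r : (r - k < n - k)%N by have := ltn_ord r; lia.
by apply: (@BottomRow _ (Ordinal lt_r)); apply: val_inj => /=; lia.
Qed.

Definition cap_vec (a : 'I_(n - k)) (l : 'I_k) : 'cV[R]_n :=
  \col_r (if (r < k)%N then ((r : nat) == l)%:R
          else ((r : nat) != k + a)%N%:R).

Lemma cap_vec_top a l j : cap_vec a l (top_row j) 0 = (j == l)%:R.
Proof. by rewrite mxE /= ltn_ord. Qed.

Lemma cap_vec_bottom a l a' : cap_vec a l (bottom_row a') 0 = (a' != a)%:R.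
Proof. by rewrite mxE /= ltnNge leq_addr /= eqn_add2l. Qed.

Lemma cap_vec_ge0 a l r : 0 <= cap_vec a l r 0.
Proof. by rewrite mxE; case: ifP. Qed.

Definition probe_lp (p : cell) : lp_instance R n (n + n) :=
  box_lp (delta_mx (top_row p.2) 0) (cap_vec p.1 p.2).

Lemma probe_lp_feasible0 p : lp_feasible (probe_lp p) 0.
Proof. by apply/box_lp_feasibleE; split=> r; rewrite mxE ?cap_vec_ge0. Qed.

Lemma probe_lp_le1 p x :
  lp_feasible (probe_lp p) x -> x (top_row p.2) 0 <= 1.
Proof.
by case/box_lp_feasibleE=> _ /(_ (top_row p.2)); rewrite cap_vec_top eqxx.
Qed.

Lemma probe_lp_opt_le1 p : (lp_opt (probe_lp p) <= 1%:E)%E.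
Proof. by apply: lp_opt_le => x; rewrite dotv_delta; apply: probe_lp_le1. Qed.

Definition proj_of_bits (B : 'I_(n - k) -> 'I_k -> bool) : 'M[R]_(n, k) :=
  \matrix_(r, j) (if (r < k)%N then ((r : nat) == j)%:R
                  else if insub (r - k)%N is Some a then (B a j)%:R else 0).

Lemma proj_of_bits_top B (y : 'cV[R]_k) l :
  (proj_of_bits B *m y) (top_row l) 0 = y l 0.
Proof.
rewrite mxE (bigD1 l) //= big1 => [|j ne_jl]; rewrite !mxE /= ltn_ord.
  by rewrite eqxx mul1r addr0.
by rewrite (inj_eq val_inj) eq_sym (negbTE ne_jl) mul0r.
Qed.

Lemma proj_of_bits_bottom B (y : 'cV[R]_k) a :
  (proj_of_bits B *m y) (bottom_row a) 0 = \sum_j (B a j)%:R * y j 0.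
Proof.
rewrite mxE; apply: eq_bigr => j _.
by rewrite !mxE /= ltnNge leq_addr addKn valK.
Qed.

Lemma probe_value_le B p y :
  lp_feasible (probe_lp p) (proj_of_bits B *m y) ->
  y p.2 0 <= (~~ B p.1 p.2)%:R.
Proof.
move=> Fy; case Bal: (B p.1 p.2) => /=.
  move/box_lp_feasibleE: Fy => [y_ge0 y_le].
  have y_coord_ge0 j : 0 <= y j 0.
    by have := y_ge0 (top_row j); rewrite proj_of_bits_top mxE.
  have := y_le (bottom_row p.1).
  rewrite proj_of_bits_bottom cap_vec_bottom eqxx (bigD1 p.2) //= Bal mul1r.
  apply: le_trans; rewrite lerDl.
  by apply: sumr_ge0 => j _; rewrite mulr_ge0.
by have := probe_lp_le1 Fy; rewrite proj_of_bits_top.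
Qed.

Lemma probe_witness_feasible B p :
  ~~ B p.1 p.2 -> lp_feasible (probe_lp p) (proj_of_bits B *m delta_mx p.2 0).
Proof.
move=> nB; apply/box_lp_feasibleE; set e : 'cV[R]_k := delta_mx p.2 0.
have e_top j : (proj_of_bits B *m e) (top_row j) 0 = (j == p.2)%:R.
  by rewrite proj_of_bits_top mxE eqxx andbT.
have e_bottom a : (proj_of_bits B *m e) (bottom_row a) 0 = (B a p.2)%:R.
  rewrite proj_of_bits_bottom (bigD1 p.2) //= big1 => [|j ne_j].
    by rewrite mxE !eqxx mulr1 addr0.
  by rewrite mxE (negbTE ne_j) mulr0.
split=> r; case: (top_bottomP r) => [j|a] ->.
- by rewrite e_top mxE.
- by rewrite e_bottom mxE.
- by rewrite e_top cap_vec_top.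
rewrite e_bottom cap_vec_bottom; case: eqVneq => [->|_].
  by rewrite (negbTE nB).
by rewrite ler_nat leq_b1.
Qed.

Lemma u_val_probe B p : u_val (proj_of_bits B) (probe_lp p) = (~~ B p.1 p.2)%:R.
Proof.
have value y : dotv (lp_c (probe_lp p)) (proj_of_bits B *m y) = y p.2 0.
  by rewrite dotv_delta proj_of_bits_top.
have attain y0 : lp_feasible (probe_lp p) (proj_of_bits B *m y0) ->
    y0 p.2 0 = (~~ B p.1 p.2)%:R ->
    u_val (proj_of_bits B) (probe_lp p) = (~~ B p.1 p.2)%:R.
  move=> Fy0 y0_val; rewrite (u_val_attained Fy0) value // => y Fy.
  by rewrite !value y0_val probe_value_le.
case Bal: (B p.1 p.2) attain => /= attain.
  apply: (attain 0); last by rewrite mxE.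
  by rewrite mulmx0; apply: probe_lp_feasible0.
apply: (attain (delta_mx p.2 0)); last by rewrite mxE !eqxx.
by apply: probe_witness_feasible; rewrite Bal.
Qed.

End Construction.

Lemma pshattered_indicator (Theta X : Type) (rR : realType)
    (F : Theta -> X -> rR) N (pts : 'I_N -> X) :
  (forall S : {set 'I_N},
     exists theta, forall i, F theta (pts i) = (i \in S)%:R) ->
  pshattered F pts (fun=> 1).
Proof.
move=> realise S; have [theta F_S] := realise S; exists theta => i.
by rewrite F_S; case: (i \in S); split; rewrite ?lexx ?ler10.
Qed.

Theorem theorem2 :
  exists C : rat, 0 < C /\
  forall (R : realType) (n k : nat), (0 < n)%N -> (0 < k)%N -> (3 * k <= n)%N ->
  exists (m : nat) (H : R) (Pi : set (lp_instance R n m)),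
    (0 < m)%N /\ 0 < H /\
    (forall pi, Pi pi -> lp_feasible pi 0 /\ (lp_opt pi <= H%:E)%E) /\
    pdim_ge (fun (P : 'M[R]_(n, k)) (pi : lp_instance R n m) => u_val P pi)
      Pi (ratr C * n%:R * k%:R).
Proof.
exists 3%:R^-1; split; first by rewrite invr_gt0 ltr0n.
move=> R n k n_gt0 _ le_3k_n.
have le_kn : (k <= n)%N by lia.
pose probe := probe_lp R le_kn.
exists (n + n)%N, 1, (range probe).
split; first by rewrite addn_gt0 n_gt0.
split; first exact: ltr01.
split=> [_ [p _ <-] | ].
  by split; [apply: probe_lp_feasible0 | apply: probe_lp_opt_le1].
exists #|{: cell n k}|, (probe \o enum_val), (fun=> 1).
split=> [i | ]; first by exists (enum_val i).
split.
  rewrite card_prod !card_ord fmorphV rmorph_nat -mulrA ler_pdivrMl ?ltr0n //.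
  by rewrite -!natrM ler_nat; nia.
apply: pshattered_indicator => S.
exists (proj_of_bits R (fun a l => enum_rank (a, l) \notin S)) => i /=.
by rewrite u_val_probe negbK -surjective_pairing enum_valK.
Qed.
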